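(* Let $(\Xi,\mathcal{F},P)$ be a probability space with a filtration of sub-$\sigma$-algebras $\mathcal{F}_1\subset\mathcal{F}_2\subset\cdots\subset\mathcal{F}$, where $\mathcal{F}_1=\{\emptyset,\Xi\}$. Let $\mathcal{Z}_t$ denote the space of (almost surely bounded) $\mathcal{F}_t$-measurable functions $\Xi\to\mathbb{R}$, and $\mathcal{Z}_{t,\infty}:=\mathcal{Z}_t\times\mathcal{Z}_{t+1}\times\cdots$. For each $t\ge 2$ let $\rho_t:\mathcal{Z}_t\to\mathcal{Z}_{t-1}$ be a coherent one-step conditional risk measure, and for $t\ge 3$ define $\tilde\rho_t:=\mathbb{E}[\,\cdot\,|\mathcal{F}_{t-2}]\circ\rho_t:\mathcal{Z}_t\to\mathcal{Z}_{t-2}$. Fix $0<\gamma<1$. For almost surely bounded sequences $Z_{[k,\infty]}\in\mathcal{Z}_{k,\infty}$ define the dynamic risk measure $\{\mathbb{F}_{k,\infty}\}_{k\ge1}$ by $$\mathbb{F}_{1,\infty}(Z_{[1,\infty]})=Z_1+\rho_2\Big(\gamma Z_2+\tilde\rho_3\Big(\gamma^2 Z_3+\tilde\rho_4\Big(\gamma^3 Z_4+\cdots\Big)\Big)\Big),$$ and for $k\ge 2$ $$\mathbb{F}_{k,\infty}(Z_{[k,\infty]})=\gamma^{k-1}Z_k+\tilde\rho_{k+1}\Big(\gamma^{k}Z_{k+1}+\tilde\rho_{k+2}\Big(\gamma^{k+1}Z_{k+2}+\cdots\Big)\Big),$$ where each infinitely nested expression is understood as the limit as $T\to\infty$ of the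 corresponding expression truncated after the term $\gamma^{T-1}Z_T$ (this limit exists for almost surely bounded sequences). Then $\{\mathbb{F}_{k,\infty}\}_{k\ge1}$ is time consistent: for all $1\le l<k$ and all almost surely bounded $Z_{[l,\infty]},W_{[l,\infty]}\in\mathcal{Z}_{l,\infty}$, if $Z_i=W_i$ for all $i=l,\ldots,k-1$ and $\mathbb{F}_{k,\infty}(Z_{[k,\infty]})\ge\mathbb{F}_{k,\infty}(W_{[k,\infty]})$, then $\mathbb{F}_{l,\infty}(Z_{[l,\infty]})\ge\mathbb{F}_{l,\infty}(W_{[l,\infty]})$.
   Context: A coherent one-step conditional risk measure is a mapping $\rho:\mathcal{Z}_{k+1}\to\mathcal{Z}_k$ satisfying: (1) monotonicity: $Z_1\ge Z_2$ implies $\rho(Z_1)\ge\rho(Z_2)$; (2) convexity: $\rho(cZ_1+(1-c)Z_2)\le c\rho(Z_1)+(1-c)\rho(Z_2)$ for $c\in[0,1]$; (3) translation invariance: $\rho(Z+W)=\rho(Z)+W$ for $W\in\mathcal{Z}_k$, $Z\in\mathcal{Z}_{k+1}$; (4) positive homogeneity: $\rho(cZ)=c\rho(Z)$ for $c\ge0$. All inequalities between random variables are almost sure. A sequence $Z_{[1,\infty]}$ is almost surely bounded if $\sup_t \operatorname{ess\,sup}|Z_t|<\infty$. In the paper, $Z_t$ are immediate rewards $r_t$ of an MDP and $\mathcal{F}_t$ is generated by the state history $s_{[1,t]}$; a typical choice is $\rho_t(r_t)=(1-\lambda_t)\mathbb{E}[r_t|\mathcal{F}_{t-1}]+\lambda_t\,\mathrm{CVaR}_{\alpha_t}[r_t|\mathcal{F}_{t-1}]$.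 *)

From HB Require Import structures.
From mathcomp Require Import all_boot all_order all_algebra.
From mathcomp Require Import all_classical all_reals all_analysis.
Set Implicit Arguments. Unset Strict Implicit. Unset Printing Implicit Defensive.
Import Order.TTheory GRing.Theory Num.Theory.
Import numFieldNormedType.Exports.
Local Open Scope classical_set_scope.
Local Open Scope ring_scope.

Section Defs.
Context (d : measure_display) (T : measurableType d) (R : realType)
        (P : probability T R).

Definition as_ (Q : T -> Prop) : Prop := {ae P, forall x, Q x}.

Definition Fmeas (G : set (set T)) (f : T -> R) : Prop :=
  forall B : set R, measurable B -> G (f @^-1` B).

(* a filtration F_1 ⊆ F_2 ⊆ ... ⊆ (measurable sets), with F_1 trivial;
   the index 0 is unused *)
Definition filtration (F : nat -> set (set T)) : Prop :=
  [/\ forall t, (1 <= t)%N -> sigma_algebra setT (F t),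
      forall t, (1 <= t)%N -> F t `<=` measurable,
      forall t, (1 <= t)%N -> F t `<=` F t.+1 &
      F 1%N = [set A | A = set0 \/ A = setT] ].

Definition Zsp (F : nat -> set (set T)) (t : nat) (X : T -> R) : Prop :=
  Fmeas (F t) X /\ exists M : R, as_ (fun x => `|X x| <= M).

Definition is_cond_exp (G : set (set T)) (X Y : T -> R) : Prop :=
  [/\ Fmeas G Y, P.-integrable setT (EFin \o Y) &
      forall A, G A ->
        (\int[P]_(x in A) (Y x)%:E = \int[P]_(x in A) (X x)%:E)%E ].

Definition cond_exp_op (F : nat -> set (set T))
    (cexp : nat -> (T -> R) -> (T -> R)) : Prop :=
  forall t (X : T -> R), (1 <= t)%N -> measurable_fun setT X ->
    (exists M : R, as_ (fun x => `|X x| <= M)) ->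
    is_cond_exp (F t) X (cexp t X).

Definition coherent_one_step (F : nat -> set (set T)) (t : nat)
    (rho : (T -> R) -> (T -> R)) : Prop :=
  [/\ forall X, Zsp F t X -> Zsp F t.-1 (rho X),
      forall X1 X2, Zsp F t X1 -> Zsp F t X2 ->
        as_ (fun x => X2 x <= X1 x) -> as_ (fun x => rho X2 x <= rho X1 x),
      forall X1 X2 (c : R), Zsp F t X1 -> Zsp F t X2 -> 0 <= c <= 1 ->
        as_ (fun x => rho (fun y => c * X1 y + (1 - c) * X2 y) x
                      <= c * rho X1 x + (1 - c) * rho X2 x),
      forall X W, Zsp F t X -> Zsp F t.-1 W ->
        as_ (fun x => rho (fun y => X y + W y) x = rho X x + W x) &
      forall X (c : R), Zsp F t X -> 0 <= c ->
        as_ (fun x => rho (fun y => c * X y) x = c * rho X x) ].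

Definition as_bounded_seq (F : nat -> set (set T)) (k : nat)
    (Z : nat -> T -> R) : Prop :=
  (forall t, (k <= t)%N -> Zsp F t (Z t)) /\
  exists M : R, forall t, (k <= t)%N -> as_ (fun x => `|Z t x| <= M).

(* nest k n Z = gamma^(k-1) Z_k + rho~_(k+1)( gamma^k Z_(k+1) + ...
   + rho~_(k+n)( gamma^(k+n-1) Z_(k+n) ) ... ),
   where rho~_t = E[ . | F_(t-2)] o rho_t *)
Fixpoint nest (rho : nat -> (T -> R) -> (T -> R))
    (cexp : nat -> (T -> R) -> (T -> R)) (gamma : R) (Z : nat -> T -> R)
    (k n : nat) {struct n} : T -> R :=
  fun x => gamma ^+ k.-1 * Z k x +
    match n with
    | 0%N => 0
    | n'.+1 => cexp k.-1 (rho k.+1 (nest rho cexp gamma Z k.+1 n')) x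
    end.

(* truncation of F_(k,oo) after the term gamma^(k+n-1) Z_(k+n) *)
Definition trunc (rho : nat -> (T -> R) -> (T -> R))
    (cexp : nat -> (T -> R) -> (T -> R)) (gamma : R) (Z : nat -> T -> R)
    (k n : nat) : T -> R :=
  if k == 1%N then
    fun x => Z 1%N x +
      match n with
      | 0%N => 0
      | n'.+1 => rho 2%N (nest rho cexp gamma Z 2 n') x
      end
  else nest rho cexp gamma Z k n.

Definition Finf (rho : nat -> (T -> R) -> (T -> R))
    (cexp : nat -> (T -> R) -> (T -> R)) (gamma : R) (k : nat)
    (Z : nat -> T -> R) : T -> R :=
  fun x => limn (fun n => trunc rho cexp gamma Z k n x).

End Defs.

From HB Require Import structures.
From mathcomp Require Import all_boot all_order all_algebra.
From mathcomp Require Import all_classical all_reals all_analysis.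
From mathcomp Require Import measurable_realfun ring lra.
Import Order.TTheory GRing.Theory Num.Theory.
Import numFieldNormedType.Exports.
Local Open Scope classical_set_scope.
Local Open Scope ring_scope.

(* Write step_op_j for the operator through which the level-j truncation
   calls the level-(j+1) one: rho_2 when j = 1, and E[ . | F_(j-1)] o rho_(j+1)
   when j >= 2.  Every step_op_j is "shift monotone": an a.s. inequality
   X <= Y + c with a constant slack c survives its application.  For rho this
   is monotonicity plus translation invariance; for conditional expectations
   it follows from the defining integral identities (a G-measurable function
   with nonpositive integrals over all events of G is a.s. nonpositive).

   Two consequences drive the proof.  (1) Consecutive truncations at level j
   differ by at most B gamma^(j+n), so they converge geometrically fast to
   F_(j,oo), with a tail bound D gamma^n.  (2) Since Z and W agree before k,
   an inequality between the level-k truncations with slack e propagates, one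
   step_op at a time, to the level-l truncations with the same slack.  The
   hypothesis F_(k,oo)(W) <= F_(k,oo)(Z) gives slack O(gamma^n) at level k, so
   F_(l,oo)(W) - F_(l,oo)(Z) is bounded by a null geometric sequence. *)

Section RealSequences.
Context {R : realType}.

Lemma le0_of_le_cvg0 {a : R} {u : R^nat} :
  u @ \oo --> 0 -> (forall n, a <= u n) -> a <= 0.
Proof.
move=> u0 au; rewrite -(cvg_lim _ u0)//.
by apply: limr_ge; [exact: cvgP u0 | exact: nearW].
Qed.

(* Increments bounded by C q^n force convergence, with tail C/(1-q) q^n:
   squeeze u between the monotone sequences u -+ C/(1-q) q^n. *)
Lemma geometric_tail_bound {u : R^nat} {C q : R} : 0 <= q < 1 ->
  (forall n, `|u n.+1 - u n| <= C * q ^+ n) ->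
  forall n, `|u n - limn u| <= C / (1 - q) * q ^+ n.
Proof.
move=> /andP[q0 q1] hu.
have q1' : 0 < 1 - q by rewrite subr_gt0.
have C0 : 0 <= C by have := hu 0%N; rewrite expr0 mulr1; apply: le_trans.
pose g n := C / (1 - q) * q ^+ n.
have g0 n : 0 <= g n by rewrite /g mulr_ge0 ?exprn_ge0// divr_ge0// ltW.
have g_cvg : g n @[n --> \oo] --> 0.
  by apply: cvg_geometric; rewrite ger0_norm.
have g_step n : g n - g n.+1 = C * q ^+ n.
  by rewrite /g exprS; field; exact: lt0r_neq0.
pose v n := u n - g n; pose w n := u n + g n.
have v_incr : {homo v : n m / (n <= m)%N >-> n <= m}.
  apply/nondecreasing_seqP => n; rewrite /v.
  by have /ler_normlP[h1 h2] := hu n; have := g_step n; lra.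
have w_decr : {homo w : n m / (n <= m)%N >-> m <= n}.
  apply/nonincreasing_seqP => n; rewrite /w.
  by have /ler_normlP[h1 h2] := hu n; have := g_step n; lra.
have v_cvg : cvgn v.
  apply: cvgP (nondecreasing_cvgn v_incr _); exists (w 0%N) => _ [n _ <-].
  by apply: le_trans (w_decr _ _ (leq0n n)); rewrite /v /w; have := g0 n; lra.
have w_cvg : cvgn w.
  apply: cvgP (nonincreasing_cvgn w_decr _); exists (v 0%N) => _ [n _ <-].
  by apply: le_trans (v_incr _ _ (leq0n n)) _; rewrite /v /w; have := g0 n; lra.
have g_is_cvg : cvgn g := cvgP _ g_cvg.
have u_cvg : cvgn u.
  have -> : u = v \+ g by apply/funext => n; rewrite /v /= subrK.
  exact: is_cvgD.
have v_lim : limn v = limn u.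
  have -> : v = u \- g by apply/funext.
  by rewrite limB ?(cvg_lim _ g_cvg) ?subr0.
have w_lim : limn w = limn u.
  have -> : w = u \+ g by apply/funext.
  by rewrite limD ?(cvg_lim _ g_cvg) ?addr0.
move=> n; have := nondecreasing_cvgn_le v_incr v_cvg n.
have := nonincreasing_cvgn_ge w_decr w_cvg n.
rewrite v_lim w_lim /v /w -/(g n) => ? ?; apply/ler_normlP; split; lra.
Qed.

End RealSequences.

Section AlmostSure.
Context {d : measure_display} {T : measurableType d} {R : realType}
  {P : probability T R}.

Lemma as_mono {Q1 Q2 : T -> Prop} :
  (forall x, Q1 x -> Q2 x) -> as_ P Q1 -> as_ P Q2.
Proof. by move=> h; rewrite /as_; apply: filterS. Qed.

Lemma as_mono2 {Q1 Q2 Q3 : T -> Prop} : (forall x, Q1 x -> Q2 x -> Q3 x) ->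
  as_ P Q1 -> as_ P Q2 -> as_ P Q3.
Proof. by move=> h; rewrite /as_; apply: filterS2. Qed.

Lemma as_mono3 {Q1 Q2 Q3 Q4 : T -> Prop} :
  (forall x, Q1 x -> Q2 x -> Q3 x -> Q4 x) ->
  as_ P Q1 -> as_ P Q2 -> as_ P Q3 -> as_ P Q4.
Proof. by move=> h; rewrite /as_; apply: filterS3. Qed.

Lemma as_dist_transport {X Y U V : T -> R} {e : R} :
  (as_ P (fun x => X x <= Y x + e) -> as_ P (fun x => U x <= V x + e)) ->
  (as_ P (fun x => Y x <= X x + e) -> as_ P (fun x => V x <= U x + e)) ->
  as_ P (fun x => `|X x - Y x| <= e) -> as_ P (fun x => `|U x - V x| <= e).
Proof.
move=> XY YX dXY.
have [h1 h2] : as_ P (fun x => X x <= Y x + e) /\ as_ P (fun x => Y x <= X x + e).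
  by split; apply: as_mono dXY => x /ler_normlP[]; lra.
by apply: as_mono2 (XY h1) (YX h2) => x ? ?; apply/ler_normlP; split; lra.
Qed.

End AlmostSure.

Section SubSigmaMeasurability.
Context {d : measure_display} {T : measurableType d} {R : realType}
  {G : set (set T)}.

(* Measurability for a sub-sigma-algebra G is measurability for the
   measurable structure generated by G, which gives access to the library's
   closure lemmas. *)
Lemma FmeasP {f : T -> R} : sigma_algebra setT G ->
  Fmeas G f <-> @measurable_fun _ _ (g_sigma_algebraType G) R setT f.
Proof.
move=> sG; split=> [fG _ B mB | mf B mB].
- by rewrite setTI; change (<<s G >> (f @^-1` B)); rewrite sigma_algebra_id//; exact: fG.
- have := mf measurableT B mB; rewrite setTI.
  by change (<<s G >> (f @^-1` B) -> G (f @^-1` B)); rewrite sigma_algebra_id.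
Qed.

Lemma Fmeas_cst (c : R) : sigma_algebra setT G -> Fmeas G (fun=> c).
Proof. by move=> sG; apply/(FmeasP sG); exact: measurable_cst. Qed.

Lemma FmeasD {f g : T -> R} : sigma_algebra setT G ->
  Fmeas G f -> Fmeas G g -> Fmeas G (fun x => f x + g x).
Proof.
by move=> sG /(FmeasP sG) mf /(FmeasP sG) mg; apply/(FmeasP sG)/measurable_funD.
Qed.

Lemma FmeasB {f g : T -> R} : sigma_algebra setT G ->
  Fmeas G f -> Fmeas G g -> Fmeas G (fun x => f x - g x).
Proof.
by move=> sG /(FmeasP sG) mf /(FmeasP sG) mg; apply/(FmeasP sG)/measurable_funB.
Qed.

Lemma FmeasZ (c : R) {f : T -> R} : sigma_algebra setT G ->
  Fmeas G f -> Fmeas G (fun x => c * f x).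
Proof.
by move=> sG /(FmeasP sG) mf; apply/(FmeasP sG); exact: measurable_funM.
Qed.

Lemma Fmeas_measurable {f : T -> R} : G `<=` measurable -> Fmeas G f ->
  measurable_fun setT f.
Proof. by move=> GM fG _ B mB; rewrite setTI; apply: GM; exact: fG. Qed.

End SubSigmaMeasurability.

Section ConditionalExpectation.
Context {d : measure_display} {T : measurableType d} {R : realType}
  {P : probability T R}.

Lemma integrable_cst {E : set T} (c : R) : measurable E ->
  P.-integrable E (EFin \o (fun=> c)).
Proof. exact: finite_measure_integrable_cst. Qed.

Lemma integrable_as_bounded {X : T -> R} {M : R} : measurable_fun setT X ->
  as_ P (fun x => `|X x| <= M) -> P.-integrable setT (EFin \o X).
Proof.
move=> mX hX; apply/integrableP; split; first exact/measurable_EFinP.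
apply: (le_lt_trans (integral_le_bound `|M|%:E _ _ _ _)) => //.
- exact/measurable_EFinP/measurableT_comp.
- by apply: as_mono hX => x hx _; rewrite lee_fin (le_trans hx)// ler_norm.
- apply: lte_mul_pinfty => //.
  by rewrite (le_lt_trans (probability_le1 P measurableT))// ltry.
Qed.

Lemma integralB_shift (E : set T) (f g : T -> R) (c : R) : measurable E ->
  P.-integrable E (EFin \o f) -> P.-integrable E (EFin \o g) ->
  (\int[P]_(x in E) (f x - (g x + c))%:E =
   \int[P]_(x in E) (f x)%:E - (\int[P]_(x in E) (g x)%:E + c%:E * P E))%E.
Proof.
move=> mE fi gi.
have gci : P.-integrable E (EFin \o (fun x => g x + c)).
  have -> : EFin \o (fun x => g x + c) = ((EFin \o g) \+ (EFin \o (fun=> c)))%E.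
    by apply/funext.
  by apply: integrableD => //; exact: integrable_cst.
under eq_integral do rewrite EFinB.
rewrite (integralB_EFin mE fi gci); congr (_ - _)%E.
under eq_integral do rewrite EFinD.
by rewrite (integralD_EFin mE gi (integrable_cst c mE)) integral_cst.
Qed.

Lemma integral_as_le0 {E : set T} {X : T -> R} : measurable E ->
  measurable_fun setT X -> as_ P (fun x => X x <= 0) ->
  (\int[P]_(x in E) (X x)%:E <= 0)%E.
Proof.
move=> mE mX X0; pose Xneg x := Num.max (- X x) 0.
have Xneg0 x : (0 <= (Xneg x)%:E)%E by rewrite lee_fin le_max lexx orbT.
rewrite (ae_eq_integral (fun x => - (Xneg x)%:E))%E //.
- by rewrite integral_ge0N// oppe_le0 integral_ge0.
- exact/measurable_EFinP/(measurable_funS measurableT).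
- apply/measurableT_comp => //; apply/measurable_EFinP.
  apply: (measurable_funS measurableT) => //.
  by apply: measurable_maxr => //; exact: measurableT_comp.
- apply: as_mono X0 => x X0 _.
  by rewrite /Xneg max_l ?oppr_ge0// EFinN oppeK.
Qed.

(* A G-measurable function whose integral over every event of G is
   nonpositive is a.s. nonpositive: the event {Y >= 1/(j+1)} lies in G and
   would otherwise carry a positive integral. *)
Lemma as_le0_of_set_integrals {G : set (set T)} {Y : T -> R} :
  sigma_algebra setT G -> G `<=` measurable -> Fmeas G Y ->
  (forall A, G A -> (\int[P]_(x in A) (Y x)%:E <= 0)%E) ->
  as_ P (fun x => Y x <= 0).
Proof.
move=> sG GM mY hY.
have below_harmonic j : as_ P (fun x => Y x < harmonic j).
  pose E := [set x | harmonic j <= Y x].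
  have GE : G E.
    have -> : E = Y @^-1` `[harmonic j, +oo[%classic.
      by apply/seteqP; split => x /=; rewrite in_itv /= andbT.
    exact: mY (measurable_itv _).
  have mE := GM _ GE.
  have lower : ((harmonic j)%:E * P E <= \int[P]_(x in E) (Y x)%:E)%E.
    rewrite -integral_cst//; apply: ge0_le_integral => //.
    - by move=> x _; rewrite lee_fin ltW ?harmonic_gt0.
    - apply/measurable_EFinP/(measurable_funS measurableT) => //.
      exact: Fmeas_measurable mY.
  have PE0 : P E = 0%E.
    apply/eqP; rewrite -measure_le0.
    have := le_trans lower (hY _ GE).
    by rewrite pmule_rle0 ?lte_fin ?harmonic_gt0.
  by exists E; split => // x /= /negP; rewrite -leNgt.
apply: as_mono (ae_foralln below_harmonic) => x hx.
apply: (@le0_of_le_cvg0 R _ harmonic) => [|n]; [exact: cvg_harmonic | exact/ltW].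
Qed.

Lemma is_cond_exp_le_shift {G : set (set T)} {X1 X2 Y1 Y2 : T -> R} (c : R) :
  sigma_algebra setT G -> G `<=` measurable ->
  is_cond_exp P G X1 Y1 -> is_cond_exp P G X2 Y2 ->
  measurable_fun setT X1 -> measurable_fun setT X2 ->
  P.-integrable setT (EFin \o X1) -> P.-integrable setT (EFin \o X2) ->
  as_ P (fun x => X1 x <= X2 x + c) -> as_ P (fun x => Y1 x <= Y2 x + c).
Proof.
move=> sG GM [mY1 iY1 eY1] [mY2 iY2 eY2] mX1 mX2 iX1 iX2 X12.
pose Y x := Y1 x - (Y2 x + c).
suff : as_ P (fun x => Y x <= 0) by apply: as_mono => x; rewrite subr_le0.
apply: (as_le0_of_set_integrals sG GM).
  by apply: FmeasB => //; apply: FmeasD => //; exact: Fmeas_cst.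
move=> A GA; have mA := GM _ GA.
have iA (f : T -> R) : P.-integrable setT (EFin \o f) -> P.-integrable A (EFin \o f).
  by apply: integrableS.
rewrite /Y integralB_shift ?iA// eY1// eY2// -integralB_shift ?iA//.
apply: integral_as_le0 => //.
- by apply: measurable_funB => //; exact: measurable_funD.
- by apply: as_mono X12 => x; rewrite subr_le0.
Qed.

Lemma is_cond_exp_cst {G : set (set T)} (c : R) : sigma_algebra setT G ->
  is_cond_exp P G (fun=> c) (fun=> c).
Proof. by move=> sG; split => //; [exact: Fmeas_cst | exact: integrable_cst]. Qed.

Lemma is_cond_exp_bound {G : set (set T)} {X Y : T -> R} (M : R) :
  sigma_algebra setT G -> G `<=` measurable -> is_cond_exp P G X Y ->
  measurable_fun setT X -> as_ P (fun x => `|X x| <= M) ->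
  as_ P (fun x => `|Y x| <= M).
Proof.
move=> sG GM hY mX bX.
have iX := integrable_as_bounded mX bX.
have up : as_ P (fun x => Y x <= M + 0).
  apply: (is_cond_exp_le_shift 0 sG GM hY (is_cond_exp_cst M sG)) => //.
    exact: integrable_cst.
  by apply: as_mono bX => x /ler_normlP[_ h]; rewrite addr0.
have low : as_ P (fun x => - M <= Y x + 0).
  apply: (is_cond_exp_le_shift 0 sG GM (is_cond_exp_cst (- M) sG) hY) => //.
    exact: integrable_cst.
  by apply: as_mono bX => x /ler_normlP[h _]; rewrite addr0 lerNl.
apply: as_mono2 up low => x; rewrite !addr0 => hu hl.
by apply/ler_normlP; split; rewrite // lerNl.
Qed.

End ConditionalExpectation.

Section NestedRiskMeasure.
Context {d : measure_display} {T : measurableType d} {R : realType}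
  {P : probability T R} {F : nat -> set (set T)}
  {rho cexp : nat -> (T -> R) -> (T -> R)} {gamma : R}.
Hypotheses (hF : filtration F)
  (hrho : forall t, (2 <= t)%N -> coherent_one_step P F t (rho t))
  (hce : cond_exp_op P F cexp) (hg : 0 < gamma < 1).

Lemma filtration_sigma {t : nat} : (1 <= t)%N -> sigma_algebra setT (F t).
Proof. by case: hF => + _ _ _; apply. Qed.

Lemma filtration_events {t : nat} : (1 <= t)%N -> F t `<=` measurable.
Proof. by case: hF => _ + _ _; apply. Qed.

Lemma Zsp_measurable {t : nat} {X : T -> R} : (1 <= t)%N -> Zsp P F t X ->
  measurable_fun setT X.
Proof. by move=> t1 [mX _]; exact: Fmeas_measurable (filtration_events t1) mX. Qed.

Lemma Zsp_cst {t : nat} (c : R) : (1 <= t)%N -> Zsp P F t (fun=> c).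
Proof.
move=> t1; split; first exact: Fmeas_cst (filtration_sigma t1).
by exists `|c|; apply: aeW.
Qed.

Lemma Zsp_lin {t : nat} (a : R) {X Y : T -> R} : (1 <= t)%N ->
  Zsp P F t X -> Zsp P F t Y -> Zsp P F t (fun x => a * X x + Y x).
Proof.
move=> t1 [mX [MX bX]] [mY [MY bY]]; have sF := filtration_sigma t1; split.
  by apply: FmeasD => //; exact: FmeasZ.
exists (`|a| * MX + MY); apply: as_mono2 bX bY => x hX hY.
by rewrite (le_trans (ler_normD _ _))// lerD// normrM ler_wpM2l.
Qed.

Lemma Zsp_scale {t : nat} (a : R) {X : T -> R} : (1 <= t)%N ->
  Zsp P F t X -> Zsp P F t (fun x => a * X x).
Proof.
move=> t1 hX; have := Zsp_lin a t1 hX (Zsp_cst 0 t1).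
by under eq_fun do rewrite addr0.
Qed.

Lemma Zsp_succ {t : nat} {X : T -> R} : (1 <= t)%N -> Zsp P F t X -> Zsp P F t.+1 X.
Proof.
move=> t1 [mX bX]; split=> // B mB.
by case: hF => _ _ + _; apply => //; exact: mX.
Qed.

Lemma rho_Zsp {t : nat} {X : T -> R} : (2 <= t)%N ->
  Zsp P F t X -> Zsp P F t.-1 (rho t X).
Proof. by move=> t2; case: (hrho _ t2) => + _ _ _ _; apply. Qed.

Lemma rho_le_shift {t : nat} {X Y : T -> R} {c : R} : (2 <= t)%N ->
  Zsp P F t X -> Zsp P F t Y -> as_ P (fun x => X x <= Y x + c) ->
  as_ P (fun x => rho t X x <= rho t Y x + c).
Proof.
move=> t2 hX hY XY; case: (hrho _ t2) => _ mono _ transl _.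
have t1 : (1 <= t)%N by exact: ltnW.
have hYc : Zsp P F t (fun x => Y x + c).
  by have := Zsp_lin 1 t1 hY (Zsp_cst c t1); under eq_fun do rewrite mul1r.
have tc : Zsp P F t.-1 (fun=> c) by apply: Zsp_cst; rewrite -subn1 subn_gt0.
by apply: as_mono2 (mono _ _ hYc hX XY) (transl _ _ hY tc) => x h <-.
Qed.

Lemma rho_bound {t : nat} {X : T -> R} {e : R} : (2 <= t)%N -> Zsp P F t X ->
  as_ P (fun x => `|X x| <= e) -> as_ P (fun x => `|rho t X x| <= e).
Proof.
move=> t2 hX bX; have t1 : (1 <= t)%N by exact: ltnW.
have h0 := Zsp_cst 0 t1.
have rho0 : as_ P (fun x => rho t (fun=> 0) x = 0).
  case: (hrho _ t2) => _ _ _ _ /(_ _ 0 h0 (lexx 0)).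
  by under eq_fun do rewrite mul0r; apply: as_mono => x ->; rewrite mul0r.
have bX0 : as_ P (fun x => `|X x - 0| <= e) by apply: as_mono bX => x; rewrite subr0.
have := as_dist_transport (rho_le_shift t2 hX h0) (rho_le_shift t2 h0 hX) bX0.
by apply: as_mono2 rho0 => x ->; rewrite subr0.
Qed.

Lemma cexp_is_cond_exp {t s : nat} {X : T -> R} : (1 <= t)%N -> (1 <= s)%N ->
  Zsp P F s X -> is_cond_exp P (F t) X (cexp t X).
Proof.
by move=> t1 s1 hX; apply: hce => //; [exact: Zsp_measurable s1 hX | case: hX].
Qed.

Lemma cexp_le_shift {t s : nat} {X1 X2 : T -> R} {c : R} :
  (1 <= t)%N -> (1 <= s)%N -> Zsp P F s X1 -> Zsp P F s X2 ->
  as_ P (fun x => X1 x <= X2 x + c) -> as_ P (fun x => cexp t X1 x <= cexp t X2 x + c).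
Proof.
move=> t1 s1 h1 h2.
have [m1 m2] := (Zsp_measurable s1 h1, Zsp_measurable s1 h2).
have [[_ [M1 b1]] [_ [M2 b2]]] := (h1, h2).
exact: (is_cond_exp_le_shift c (filtration_sigma t1) (filtration_events t1)
  (cexp_is_cond_exp t1 s1 h1) (cexp_is_cond_exp t1 s1 h2) m1 m2
  (integrable_as_bounded m1 b1) (integrable_as_bounded m2 b2)).
Qed.

Lemma cexp_bound {t s : nat} {X : T -> R} {e : R} : (1 <= t)%N -> (1 <= s)%N ->
  Zsp P F s X -> as_ P (fun x => `|X x| <= e) ->
  as_ P (fun x => `|cexp t X x| <= e).
Proof.
move=> t1 s1 hX; apply: (is_cond_exp_bound e (filtration_sigma t1)
  (filtration_events t1) (cexp_is_cond_exp t1 s1 hX)).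
exact: Zsp_measurable s1 hX.
Qed.

Lemma cexp_Zsp {t s : nat} {X : T -> R} : (1 <= t)%N -> (1 <= s)%N ->
  Zsp P F s X -> Zsp P F t (cexp t X).
Proof.
move=> t1 s1 hX; have [mc _ _] := cexp_is_cond_exp t1 s1 hX.
have [_ [M bM]] := hX.
by split=> //; exists M; exact: cexp_bound t1 s1 hX bM.
Qed.

(* Levels j >= 2 condition on F_(j-1), a genuine level of the filtration. *)
Lemma pred_ge1 {j : nat} : (1 <= j)%N -> j <> 1%N -> (1 <= j.-1)%N.
Proof. by case: j => [|[|j]]. Qed.

Definition step_op (j : nat) : (T -> R) -> T -> R :=
  if j == 1%N then rho 2 else fun V => cexp j.-1 (rho j.+1 V).

Lemma step_op_Zsp {j : nat} {V : T -> R} : (1 <= j)%N ->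
  Zsp P F j.+1 V -> Zsp P F j (step_op j V).
Proof.
rewrite /step_op; case: eqP => [-> _|j_neq1 j1 hV]; first exact: rho_Zsp.
have j1' := pred_ge1 j1 j_neq1.
have := Zsp_succ j1' (cexp_Zsp j1' j1 (@rho_Zsp j.+1 _ j1 hV)).
by rewrite prednK.
Qed.

Lemma step_op_le_shift {j : nat} {V1 V2 : T -> R} {c : R} : (1 <= j)%N ->
  Zsp P F j.+1 V1 -> Zsp P F j.+1 V2 -> as_ P (fun x => V1 x <= V2 x + c) ->
  as_ P (fun x => step_op j V1 x <= step_op j V2 x + c).
Proof.
rewrite /step_op; case: eqP => [-> _|j_neq1 j1 h1 h2 V12]; first exact: rho_le_shift.
apply: (cexp_le_shift _ j1 (@rho_Zsp j.+1 _ j1 h1) (@rho_Zsp j.+1 _ j1 h2)).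
  exact: pred_ge1 j1 j_neq1.
exact: rho_le_shift.
Qed.

Lemma step_op_bound {j : nat} {V : T -> R} {e : R} : (1 <= j)%N ->
  Zsp P F j.+1 V -> as_ P (fun x => `|V x| <= e) ->
  as_ P (fun x => `|step_op j V x| <= e).
Proof.
rewrite /step_op; case: eqP => [-> _|j_neq1 j1 hV bV]; first exact: rho_bound.
apply: (cexp_bound _ j1 (@rho_Zsp j.+1 _ j1 hV)).
  exact: pred_ge1 j1 j_neq1.
exact: rho_bound.
Qed.

Lemma trunc0 (Z : nat -> T -> R) {j : nat} : (1 <= j)%N ->
  trunc rho cexp gamma Z j 0 = (fun x => gamma ^+ j.-1 * Z j x).
Proof.
move=> j1; apply/funext => x; rewrite /trunc.
by case: eqP => [->|_] /=; rewrite addr0 // expr0 mul1r.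
Qed.

Lemma truncS (Z : nat -> T -> R) {j : nat} (n : nat) : (1 <= j)%N ->
  trunc rho cexp gamma Z j n.+1 =
  (fun x => gamma ^+ j.-1 * Z j x + step_op j (trunc rho cexp gamma Z j.+1 n) x).
Proof.
move=> j1; apply/funext => x; rewrite /trunc /step_op eqSS.
move: j1; rewrite lt0n => /negbTE ->.
by case: eqP => [->|_] //=; rewrite expr0 mul1r.
Qed.

Lemma trunc_Zsp {l : nat} {Z : nat -> T -> R} :
  (forall t, (l <= t)%N -> Zsp P F t (Z t)) ->
  forall n j, (l <= j)%N -> (1 <= j)%N -> Zsp P F j (trunc rho cexp gamma Z j n).
Proof.
move=> hZ; elim=> [|n IH] j lj j1.
  by rewrite trunc0//; apply: Zsp_scale => //; exact: hZ.
rewrite truncS//; apply: Zsp_lin => //; first exact: hZ.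
by apply: step_op_Zsp => //; apply: IH; exact: leqW.
Qed.

Lemma trunc_step {l : nat} {Z : nat -> T -> R} {B : R} :
  (forall t, (l <= t)%N -> Zsp P F t (Z t)) ->
  (forall t, (l <= t)%N -> as_ P (fun x => `|Z t x| <= B)) ->
  forall n j, (l <= j)%N -> (1 <= j)%N ->
  as_ P (fun x => `|trunc rho cexp gamma Z j n.+1 x - trunc rho cexp gamma Z j n x|
                  <= B * gamma ^+ (j + n)).
Proof.
move=> hZ hB; have g0 : 0 <= gamma by case/andP: hg => /ltW.
elim=> [|n IH] j lj j1;
  have Zs m : Zsp P F j.+1 (trunc rho cexp gamma Z j.+1 m) :=
    trunc_Zsp hZ m _ (leqW lj) (ltn0Sn j);
  rewrite truncS//.
- have b1 : as_ P (fun x => `|trunc rho cexp gamma Z j.+1 0 x| <= B * gamma ^+ j).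
    rewrite trunc0//; apply: as_mono (hB _ (leqW lj)) => x hx /=.
    by rewrite normrM normrX ger0_norm// mulrC ler_wpM2r// exprn_ge0.
  have := step_op_bound j1 (Zs 0%N) b1.
  by apply: as_mono => x; rewrite (trunc0 Z j1) addn0 addrAC subrr add0r.
- have := as_dist_transport (step_op_le_shift j1 (Zs n.+1) (Zs n))
    (step_op_le_shift j1 (Zs n) (Zs n.+1)) (IH _ (leqW lj) (ltn0Sn j)).
  by apply: as_mono => x; rewrite (truncS Z n j1) addnS -addSn opprD addrACA subrr add0r.
Qed.

Lemma trunc_tail {l j : nat} {V : nat -> T -> R} : (1 <= l)%N -> (l <= j)%N ->
  as_bounded_seq P F l V ->
  exists D : R, as_ P (fun x => forall n,
    `|trunc rho cexp gamma V j n x - Finf rho cexp gamma j V x| <= D * gamma ^+ n).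
Proof.
move=> l1 lj [hV [B hB]]; exists (B * gamma ^+ j / (1 - gamma)).
have g01 : 0 <= gamma < 1 by case/andP: hg => /ltW -> ->.
have steps n := trunc_step hV hB n j lj (leq_trans l1 lj).
apply: as_mono (ae_foralln steps) => x hx n.
apply: (geometric_tail_bound g01) => m.
by rewrite -mulrA -exprD; exact: hx.
Qed.

Lemma trunc_propagate {l k n : nat} {Z W : nat -> T -> R} {e : R} : (1 <= l)%N ->
  (forall t, (l <= t)%N -> Zsp P F t (Z t)) ->
  (forall t, (l <= t)%N -> Zsp P F t (W t)) ->
  (forall i, (l <= i < k)%N -> as_ P (fun x => Z i x = W i x)) ->
  as_ P (fun x => trunc rho cexp gamma W k n x <= trunc rho cexp gamma Z k n x + e) ->
  forall m j, (l <= j)%N -> (j + m)%N = k ->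
  as_ P (fun x => trunc rho cexp gamma W j (n + m) x
                  <= trunc rho cexp gamma Z j (n + m) x + e).
Proof.
move=> l1 hZ hW hZW hk; elim=> [|m IH] j lj jk.
  by move: jk; rewrite !addn0 => ->.
have j1 := leq_trans l1 lj.
have ljk : (l <= j < k)%N by rewrite lj -jk addnS ltnS leq_addr.
have := IH j.+1 (leqW lj) (etrans (addSnnS j m) jk).
move/(step_op_le_shift j1 (trunc_Zsp hW _ _ (leqW lj) (ltn0Sn j))
                          (trunc_Zsp hZ _ _ (leqW lj) (ltn0Sn j))).
rewrite addnS !(truncS _ _ j1).
by apply: as_mono2 (hZW j ljk) => x -> h; rewrite -addrA lerD2l.
Qed.

End NestedRiskMeasure.

Theorem theorem1 (d : measure_display) (T : measurableType d) (R : realType)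
    (P : probability T R) (F : nat -> set (set T))
    (rho : nat -> (T -> R) -> (T -> R))
    (cexp : nat -> (T -> R) -> (T -> R)) (gamma : R) :
  filtration F ->
  (forall t, (2 <= t)%N -> coherent_one_step P F t (rho t)) ->
  cond_exp_op P F cexp ->
  0 < gamma < 1 ->
  forall (l k : nat) (Z W : nat -> T -> R),
    (1 <= l)%N -> (l < k)%N ->
    as_bounded_seq P F l Z -> as_bounded_seq P F l W ->
    (forall i, (l <= i < k)%N -> as_ P (fun x => Z i x = W i x)) ->
    as_ P (fun x => Finf rho cexp gamma k W x <= Finf rho cexp gamma k Z x) ->
    as_ P (fun x => Finf rho cexp gamma l W x <= Finf rho cexp gamma l Z x).
Proof.
move=> hF hrho hce hg l k Z W l1 lk bZ bW ZW H.
have [DZk tZk] := trunc_tail hF hrho hce hg l1 (ltnW lk) bZ.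
have [DWk tWk] := trunc_tail hF hrho hce hg l1 (ltnW lk) bW.
have [DZl tZl] := trunc_tail hF hrho hce hg l1 (leqnn l) bZ.
have [DWl tWl] := trunc_tail hF hrho hce hg l1 (leqnn l) bW.
(* The limit hypothesis at level k becomes an O(gamma^n) slack between
   truncations, which propagates down to level l. *)
have slack n : as_ P (fun x => trunc rho cexp gamma W k n x
                          <= trunc rho cexp gamma Z k n x + (DZk + DWk) * gamma ^+ n).
  apply: as_mono3 tZk tWk H => x tZ tW h.
  by have := tZ n; have := tW n; rewrite !ler_distl => /andP[? ?] /andP[? ?]; lra.
have prop n := trunc_propagate hF hrho hce l1 (proj1 bZ) (proj1 bW) ZW (slack n)
  (k - l) l (leqnn l) (subnKC (ltnW lk)).
(* Letting n -> oo bounds F_(l,oo)(W) - F_(l,oo)(Z) by D gamma^n. *)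
pose m := (k - l)%N; pose D := DZk + DWk + (DZl + DWl) * gamma ^+ m.
have g1 : `|gamma| < 1 by case/andP: hg => g0 g1; rewrite ger0_norm// ltW.
apply: as_mono3 (ae_foralln prop) tZl tWl => x hp tZ tW.
rewrite -subr_le0; apply: (le0_of_le_cvg0 (cvg_geometric D g1)) => n /=.
have := tZ (n + m)%N; have := tW (n + m)%N; have := hp n.
rewrite -/m /D exprD !ler_distl => ? /andP[? ?] /andP[? ?]; lra.
Qed.
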